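(* Let $\mathscr D_n$ be a finite b-quad-graph with associated graph $G_n$, let $\alpha_n$ be an admissible labelling, and let $\mathscr C_n,\widetilde{\mathscr C}_n$ be embedded convex $q$-bounded circle patterns for $\mathscr D_n$ and $\alpha_n$ with radius functions $r_n,\tilde r_n$. Let $u_n(v)=\tilde r_n(v)/r_n(v)$. Define two Laplacians on functions $h:V(G_n)\to\mathbb R$ by $\Delta h(v_0)=\sum_{[v_0,v]\in E(G_n)}\mu([v_0,v])(h(v)-h(v_0))$ and $\widetilde\Delta h(v_0)=\sum_{[v_0,v]\in E(G_n)}\tilde\mu([v_0,v])(h(v)-h(v_0))$, where $\mu([v_0,v])=2f'_{\alpha_n([v_0,v])}(\log(r_n(v)/r_n(v_0)))$ and $\tilde\mu([v_0,v])=2f'_{\alpha_n([v_0,v])}(\log(\tilde r_n(v)/\tilde r_n(v_0)))$, with $f'_\theta(x)=\frac{\sin\theta}{2(\cosh x-\cos\theta)}$. Then for all interior vertices $v$ of $G_n$, $\Delta u_n(v)\ge0$ and $\widetilde\Delta(1/u_n)(v)\ge0$.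
   Context: A b-quad-graph: strongly regular cell decomposition into quadrilaterals with bipartite 1-skeleton (white/black vertices); $G_n$ has the white vertices, adjacent iff incident to a common face. Admissible labelling: at each interior black vertex the labels of incident faces sum to $2\pi$. Circle pattern: circles with circles of adjacent vertices intersecting at exterior angle $\alpha$ (angle at an intersection point between the radii to the two centers), with equally oriented kites formed by centers and intersection points, locally isomorphic to the b-quad-graph at interior vertices; embedded: kites have disjoint interiors and meet in an edge/vertex iff the faces do. Convex $q$-bounded ($q>1$): all kites convex and each kite's diagonal length ratio lies in $[1/q,q]$. *)

From Stdlib Require Import Reals Lra List.
Open Scope R_scope.

(* A face f has boundary cycle, in counterclockwise order,              *)
(*   fw f false, fb f false, fw f true, fb f true.                      *)
Record bquad := mkBQ {
  W : Type; B : Type; F : Type;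
  eqW : forall x y : W, {x = y} + {x <> y};
  eqB : forall x y : B, {x = y} + {x <> y};
  enumW : list W; enumB : list B; enumF : list F;
  fw : F -> bool -> W;
  fb : F -> bool -> B }.

Arguments fw {_} _ _.
Arguments fb {_} _ _.

(* The axioms of a finite, strongly regular, consistently oriented
   cell decomposition into quadrilaterals with bipartite 1-skeleton. *)
Definition is_bquad (D : bquad) : Prop :=
  (NoDup (enumW D) /\ forall w, In w (enumW D)) /\
  (NoDup (enumB D) /\ forall b, In b (enumB D)) /\
  (NoDup (enumF D) /\ forall f, In f (enumF D)) /\
  (forall f : F D, fw f false <> fw f true /\ fb f false <> fb f true) /\
  (* strong regularity: two distinct faces meet in at most a vertex or an
     edge; for quadrilaterals with bipartite boundary this means that they
     do not share both white or both black vertices *)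
  (forall f g : F D, f <> g ->
     ~ (forall i, exists j, fw f i = fw g j) /\
     ~ (forall i, exists j, fb f i = fb g j)) /\
  (forall w : W D, exists (f : F D) i, fw f i = w) /\
  (forall b : B D, exists (f : F D) i, fb f i = b) /\
  (* consistent orientation (an edge has at most one face on each side):
     at white corner (f,i) the face goes counterclockwise from edge
     [fw f i, fb f i] to edge [fw f i, fb f (negb i)] *)
  (forall (f g : F D) i j, fw f i = fw g j -> fb f i = fb g j -> f = g /\ i = j) /\
  (forall (f g : F D) i j, fw f i = fw g j -> fb f (negb i) = fb g (negb j) ->
     f = g /\ i = j).

Fixpoint chain {A} (Rl : A -> A -> Prop) (l : list A) : Prop :=
  match l with
  | a :: ((b :: _) as t) => Rl a b /\ chain Rl t
  | _ => True
  end.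

Definition cyc_chain {A} (Rl : A -> A -> Prop) (l : list A) : Prop :=
  match l with
  | nil => True
  | a :: _ => chain Rl (l ++ a :: nil)
  end.

(* A white vertex is interior iff the faces around it form a closed
   cycle (each consecutive pair sharing an edge). *)
Definition interior_W (D : bquad) (w : W D) : Prop :=
  exists l : list (F D * bool),
    l <> nil /\ NoDup l /\
    (forall f i, fw f i = w <-> In (f, i) l) /\
    cyc_chain (fun x y => fb (fst x) (negb (snd x)) = fb (fst y) (snd y)) l.

(* Same for black vertices; at black corner (f,j) the face goes
   counterclockwise from edge [fb f j, fw f (negb j)] to [fb f j, fw f j]. *)
Definition interior_B (D : bquad) (b : B D) : Prop :=
  exists l : list (F D * bool),
    l <> nil /\ NoDup l /\
    (forall f j, fb f j = b <-> In (f, j) l) /\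
    cyc_chain (fun x y => fw (fst x) (snd x) = fw (fst y) (negb (snd y))) l.

Definition sumF (D : bquad) (g : F D -> R) : R :=
  fold_right (fun f acc => g f + acc) 0 (enumF D).

Definition sum_bool (g : bool -> R) : R := g false + g true.

Definition admissible (D : bquad) (alpha : F D -> R) : Prop :=
  (forall f, 0 < alpha f < PI) /\
  (forall b, interior_B D b ->
     sumF D (fun f => sum_bool (fun j =>
        if eqB D (fb f j) b then alpha f else 0)) = 2 * PI).

Definition pt := (R * R)%type.
Definition vsub (a b : pt) : pt := (fst a - fst b, snd a - snd b).
Definition dot (a b : pt) : R := fst a * fst b + snd a * snd b.
Definition cross (a b : pt) : R := fst a * snd b - snd a * fst b.
Definition norm (a : pt) : R := sqrt (dot a a).
Definition dist (a b : pt) : R := norm (vsub a b).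
Definition angle (a b : pt) : R := acos (dot a b / (norm a * norm b)).
Definition comb (t : R) (a b : pt) : pt :=
  (t * fst a + (1 - t) * fst b, t * snd a + (1 - t) * snd b).

(* Data of a circle pattern: centres c, radii r (the radius function),
   intersection points p (images of black vertices). *)
Section Kites.
Variable D : bquad.
Variables (c : W D -> pt) (p : B D -> pt).

Definition kite (f : F D) : list pt :=
  c (fw f false) :: p (fb f false) :: c (fw f true) :: p (fb f true) :: nil.

Definition kv (f : F D) (k : nat) : pt := nth (k mod 4) (kite f) (0, 0).

Definition kite_area2 (f : F D) : R :=
  cross (kv f 0) (kv f 1) + cross (kv f 1) (kv f 2)
  + cross (kv f 2) (kv f 3) + cross (kv f 3) (kv f 0).

Definition in_kite (s : R) (f : F D) (X : pt) : Prop :=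
  forall k, (k < 4)%nat ->
    0 <= s * cross (vsub (kv f (S k)) (kv f k)) (vsub X (kv f k)).
Definition in_kite_int (s : R) (f : F D) (X : pt) : Prop :=
  forall k, (k < 4)%nat ->
    0 < s * cross (vsub (kv f (S k)) (kv f k)) (vsub X (kv f k)).

Definition common_img (f g : F D) (P : pt) : Prop :=
  (exists i j, fw f i = fw g j /\ P = c (fw f i)) \/
  (exists i j, fb f i = fb g j /\ P = p (fb f i)).

(* convex hull of the images of the common vertices (empty, a point, or
   a segment = image of the common edge) *)
Definition hull_common (f g : F D) (X : pt) : Prop :=
  exists P Q t, common_img f g P /\ common_img f g Q /\ 0 <= t <= 1 /\
    X = comb t P Q.
End Kites.

Definition circle_pattern (D : bquad) (alpha : F D -> R)
    (c : W D -> pt) (r : W D -> R) (p : B D -> pt) (s : R) : Prop :=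
  (s = 1 \/ s = -1) /\
  (forall w, 0 < r w) /\
  forall f,
    (forall i j, dist (p (fb f j)) (c (fw f i)) = r (fw f i)) /\
    (* exterior intersection angle alpha: angle at the intersection point
       between the radii to the two centres *)
    (forall j, angle (vsub (c (fw f false)) (p (fb f j)))
                     (vsub (c (fw f true)) (p (fb f j))) = alpha f) /\
    0 < s * kite_area2 D c p f.

Definition convex_kites (D : bquad) (c : W D -> pt) (p : B D -> pt)
    (s : R) : Prop :=
  forall f k, (k < 4)%nat ->
    0 <= s * cross (vsub (kv D c p f (S k)) (kv D c p f k))
                   (vsub (kv D c p f (S (S k))) (kv D c p f (S k))).

Definition q_bounded (D : bquad) (q : R) (c : W D -> pt) (p : B D -> pt)
    : Prop :=
  forall f,
    let d1 := dist (c (fw f false)) (c (fw f true)) in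
    let d2 := dist (p (fb f false)) (p (fb f true)) in
    / q <= d1 / d2 <= q.

Definition embedded (D : bquad) (c : W D -> pt) (p : B D -> pt) (s : R)
    : Prop :=
  forall f g, f <> g ->
    (forall X, ~ (in_kite_int D c p s f X /\ in_kite_int D c p s g X)) /\
    (forall X, (in_kite D c p s f X /\ in_kite D c p s g X) <->
               hull_common D c p f g X).

Definition ecq_pattern (D : bquad) (alpha : F D -> R) (q : R)
    (c : W D -> pt) (r : W D -> R) (p : B D -> pt) (s : R) : Prop :=
  circle_pattern D alpha c r p s /\ convex_kites D c p s /\
  q_bounded D q c p /\ embedded D c p s.

Definition fprime (theta x : R) : R :=
  sin theta / (2 * (cosh x - cos theta)).

Definition mu (D : bquad) (alpha : F D -> R) (r : W D -> R)
    (f : F D) (v0 v : W D) : R :=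
  2 * fprime (alpha f) (ln (r v / r v0)).

(* Delta h (v0) = sum over edges [v0,v] of G_n; the edges of G_n at v0
   correspond bijectively to the faces incident to v0 (strong regularity),
   v being the opposite white vertex of the face. *)
Definition laplacian (D : bquad) (alpha : F D -> R) (r : W D -> R)
    (h : W D -> R) (v0 : W D) : R :=
  sumF D (fun f => sum_bool (fun i =>
    if eqW D (fw f i) v0 then
      mu D alpha r f v0 (fw f (negb i)) * (h (fw f (negb i)) - h v0)
    else 0)).

(* At an interior white vertex v, the kite of a face with opposite white vertex w
   has angle 2 h(y) at the centre c(v), where y = r(w) / r(v) and h = [half_angle al].
   Because the pattern is embedded, these angles close up around c(v) to exactly
   2 PI, in both patterns.  Convexity of the kites forces y >= cos al, and there h is
   concave with h'(y) = sin al / (1 - 2 y cos al + y^2).  The edge term of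
   Delta u (v) equals 2 u(v) h'(y) (z - y), z being the ratio in the other pattern,
   so concavity gives Delta u (v) >= 2 u(v) (sum h(z) - sum h(y)) = 0.  Exchanging
   the two patterns gives the statement for 1 / u. *)

From Stdlib Require Import Reals Lra Lia List Permutation.
Open Scope R_scope.

Lemma sin_cos_sq (x : R) : sin x * sin x + cos x * cos x = 1.
Proof. pose proof (sin2_cos2 x) as H. unfold Rsqr in H. exact H. Qed.

Lemma mul_cos_le_sin (x : R) : 0 <= x <= PI / 2 -> x * cos x <= sin x.
Proof.
  intros Hx. pose proof PI_4.
  destruct (sin_bound x 0 ltac:(lra) ltac:(lra)) as [Hsin _].
  destruct (cos_bound x 0 ltac:(lra) ltac:(lra)) as [_ Hcos].
  unfold sin_approx, cos_approx, sin_term, cos_term in *. simpl in Hsin, Hcos.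
  assert (x * x <= 4) by nra.
  assert (0 <= x * x * x) by (apply Rmult_le_pos; nra).
  nra.
Qed.

(* [kite_sq al y] is the squared distance between the two centres of a kite,
   in units of the radius r of the first circle, when the second circle has
   radius [y * r] and they meet at exterior angle [al]; [half_angle al y] is
   the angle of the kite at the first centre between a radius and the line of
   centres, so the full kite angle there is [2 * half_angle al y]. *)
Definition kite_sq (al y : R) : R := 1 - 2 * y * cos al + y * y.
Definition half_angle (al y : R) : R :=
  acos ((1 - y * cos al) / sqrt (kite_sq al y)).

Lemma kite_sq_pos (al y : R) : 0 < al < PI -> 0 < kite_sq al y.
Proof.
  intros Hal. pose proof (sin_gt_0 al ltac:(lra) ltac:(lra)).
  pose proof (sin_cos_sq al). pose proof (Rle_0_sqr (y - cos al)).
  unfold kite_sq, Rsqr in *. nra.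
Qed.

Lemma sqrt_kite_sq_sq (al y : R) :
  0 < al < PI -> sqrt (kite_sq al y) * sqrt (kite_sq al y) = kite_sq al y.
Proof. intros Hal. apply sqrt_sqrt. left. apply kite_sq_pos, Hal. Qed.

Lemma half_angle_cos_sin (al y : R) : 0 < al < PI -> 0 < y ->
  cos (half_angle al y) = (1 - y * cos al) / sqrt (kite_sq al y) /\
  sin (half_angle al y) = y * sin al / sqrt (kite_sq al y).
Proof.
  intros Hal Hy.
  pose proof (sqrt_lt_R0 _ (kite_sq_pos al y Hal)) as HV.
  pose proof (sqrt_kite_sq_sq al y Hal) as HV2.
  pose proof (sin_gt_0 al ltac:(lra) ltac:(lra)). pose proof (sin_cos_sq al).
  set (V := sqrt (kite_sq al y)) in *.
  assert (Hpyth : ((1 - y * cos al) / V)² = 1 - (y * sin al / V)²).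
  { unfold Rsqr. field_simplify_eq; [|lra].
    replace (V ^ 2) with (V * V) by ring. rewrite HV2. unfold kite_sq.
    replace (sin al ^ 2) with (1 - cos al ^ 2) by (simpl; lra). ring. }
  assert (Hrange : -1 <= (1 - y * cos al) / V <= 1).
  { pose proof (Rle_0_sqr (y * sin al / V)).
    set (t := (1 - y * cos al) / V) in *. unfold Rsqr in *. nra. }
  unfold half_angle; fold V. split.
  - apply cos_acos, Hrange.
  - rewrite sin_acos, Hpyth by exact Hrange.
    replace (1 - (1 - (y * sin al / V)²)) with ((y * sin al / V)²) by ring.
    apply sqrt_Rsqr. apply Rlt_le, Rdiv_lt_0_compat; nra.
Qed.

Lemma half_angle_sub_sin_cos (al y z : R) : 0 < al < PI -> 0 < y -> 0 < z ->
  let d := half_angle al z - half_angle al y in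
  let VV := sqrt (kite_sq al z) * sqrt (kite_sq al y) in
  sin d = sin al * (z - y) / VV /\
  cos d = (kite_sq al y + (z - y) * (y - cos al)) / VV.
Proof.
  intros Hal Hy Hz d VV.
  destruct (half_angle_cos_sin al y Hal Hy) as [cy sy].
  destruct (half_angle_cos_sin al z Hal Hz) as [cz sz].
  pose proof (sqrt_lt_R0 _ (kite_sq_pos al y Hal)).
  pose proof (sqrt_lt_R0 _ (kite_sq_pos al z Hal)).
  pose proof (sin_cos_sq al).
  unfold d, VV. rewrite sin_minus, cos_minus, cy, sy, cz, sz.
  split; field_simplify_eq; try lra.
  unfold kite_sq. replace (sin al ^ 2) with (1 - cos al ^ 2) by (simpl; lra). ring.
Qed.

Lemma first_quadrant_of_sin_cos (d : R) : -PI <= d <= PI ->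
  0 <= sin d -> 0 < cos d -> 0 <= d <= PI / 2.
Proof.
  intros Hd Hsin Hcos. split.
  - destruct (Rle_lt_dec 0 d) as [|Hneg]; [assumption|].
    destruct (Rle_lt_dec d (- (PI / 2))).
    + pose proof (cos_le_0 (- d) ltac:(lra) ltac:(lra)). rewrite cos_neg in *. lra.
    + pose proof (sin_lt_0_var d ltac:(lra) Hneg). lra.
  - destruct (Rle_lt_dec d (PI / 2)) as [|Hgt]; [assumption|].
    pose proof (cos_le_0 d ltac:(lra) ltac:(lra)). lra.
Qed.

Lemma neg_of_sin_neg (d : R) : d <= PI -> sin d < 0 -> d < 0.
Proof.
  intros Hd Hsin. destruct (Rlt_le_dec d 0) as [|Hpos]; [assumption|].
  pose proof (sin_ge_0 d Hpos Hd). lra.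
Qed.

Lemma half_angle_sub_le (al y z : R) : 0 < al < PI -> 0 < y -> 0 < z ->
  cos al <= y -> cos al <= z ->
  half_angle al z - half_angle al y <= sin al * (z - y) / kite_sq al y.
Proof.
  intros Hal Hy Hz Hcy Hcz.
  destruct (half_angle_sub_sin_cos al y z Hal Hy Hz) as [Hsd Hcd].
  pose proof (acos_bound ((1 - y * cos al) / sqrt (kite_sq al y))).
  pose proof (acos_bound ((1 - z * cos al) / sqrt (kite_sq al z))).
  assert (Hd : -PI <= half_angle al z - half_angle al y <= PI) by (unfold half_angle; lra).
  set (d := half_angle al z - half_angle al y) in *.
  pose proof (sqrt_lt_R0 _ (kite_sq_pos al y Hal)) as Vy.
  pose proof (sqrt_lt_R0 _ (kite_sq_pos al z Hal)) as Vz.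
  pose proof (sqrt_kite_sq_sq al y Hal) as Vy2.
  pose proof (kite_sq_pos al y Hal) as Qy.
  pose proof (sin_gt_0 al ltac:(lra) ltac:(lra)) as Hs.
  set (Y := sqrt (kite_sq al y)) in *. set (Z := sqrt (kite_sq al z)) in *.
  assert (HZY : 0 < / (Z * Y)) by (apply Rinv_0_lt_compat; nra).
  destruct (Rle_lt_dec y z) as [Hyz | Hzy].
  - (* [d] is in the first quadrant, where [d <= tan d] *)
    apply Rmult_le_reg_r with (kite_sq al y); [exact Qy|].
    unfold Rdiv. rewrite Rmult_assoc, Rinv_l, Rmult_1_r by lra.
    assert (Hsin : 0 <= sin d)
      by (rewrite Hsd; apply Rmult_le_pos; [apply Rmult_le_pos|]; lra).
    assert (Hcos : 0 < cos d) by (rewrite Hcd; apply Rdiv_lt_0_compat; nra).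
    pose proof (first_quadrant_of_sin_cos d Hd Hsin Hcos) as Hquad.
    pose proof (mul_cos_le_sin d Hquad) as Hx. rewrite Hsd, Hcd in Hx. unfold Rdiv in Hx.
    assert (d * (kite_sq al y + (z - y) * (y - cos al)) <= sin al * (z - y))
      by (apply Rmult_le_reg_r with (/ (Z * Y)); [exact HZY | lra]).
    assert (0 <= d * ((z - y) * (y - cos al))) by (apply Rmult_le_pos; nra).
    lra.
  - (* [d < 0] and [sin (- d) <= - d] *)
    assert (Hdn : d < 0).
    { apply neg_of_sin_neg; [lra|].
      assert (sin al * (z - y) < 0) by nra. rewrite Hsd. unfold Rdiv. nra. }
    pose proof (sin_lt_x (- d) ltac:(lra)) as Hx. rewrite sin_neg, Hsd in Hx.
    assert (HZ : Z <= Y) by (apply sqrt_le_1_alt; unfold kite_sq; nra).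
    assert (Hmono : sin al * (y - z) / kite_sq al y <= sin al * (y - z) / (Z * Y))
      by (rewrite <- Vy2; apply Rmult_le_compat_l; [nra | apply Rinv_le_contravar; nra]).
    unfold Rdiv in *. lra.
Qed.

Definition sign (s : R) : Prop := s = 1 \/ s = -1.

Lemma sign_sq (s : R) : sign s -> s * s = 1.
Proof. intros [-> | ->]; ring. Qed.

Lemma cos_sign (s t : R) : sign s -> cos (s * t) = cos t.
Proof.
  intros [-> | ->]; [now rewrite Rmult_1_l|].
  replace (-1 * t) with (- t) by ring. apply cos_neg.
Qed.

Lemma sin_sign (s t : R) : sign s -> sin (s * t) = s * sin t.
Proof.
  intros [-> | ->]; [now rewrite !Rmult_1_l|].
  replace (-1 * t) with (- t) by ring. rewrite sin_neg. ring.
Qed.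

Definition rot (t : R) (u : pt) : pt :=
  (cos t * fst u - sin t * snd u, sin t * fst u + cos t * snd u).

Lemma rot_add (t1 t2 : R) (u : pt) : rot t1 (rot t2 u) = rot (t1 + t2) u.
Proof.
  destruct u as [u1 u2]. unfold rot; simpl. rewrite cos_plus, sin_plus. f_equal; ring.
Qed.

Lemma rot_0 (u : pt) : rot 0 u = u.
Proof. destruct u as [u1 u2]. unfold rot; simpl. rewrite cos_0, sin_0. f_equal; ring. Qed.

Lemma rot_sign_2PI (s : R) (u : pt) : sign s -> rot (s * (2 * PI)) u = u.
Proof.
  intros Hs. destruct u as [u1 u2]. unfold rot; simpl.
  rewrite cos_sign, sin_sign, cos_2PI, sin_2PI by exact Hs. f_equal; ring.
Qed.

Lemma dot_rot (t : R) (u : pt) : dot u (rot t u) = dot u u * cos t.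
Proof. destruct u as [u1 u2]. unfold rot, dot; simpl. ring. Qed.

Lemma cross_rot_rot (t1 t2 : R) (u : pt) :
  cross (rot t1 u) (rot t2 u) = dot u u * sin (t2 - t1).
Proof. destruct u as [u1 u2]. unfold rot, cross, dot; simpl. rewrite sin_minus. ring. Qed.

Lemma dot_self_nonneg (u : pt) : 0 <= dot u u.
Proof.
  destruct u as [u1 u2]. unfold dot; simpl.
  pose proof (Rle_0_sqr u1). pose proof (Rle_0_sqr u2). unfold Rsqr in *. lra.
Qed.

Lemma norm_sq (u : pt) : norm u * norm u = dot u u.
Proof. apply sqrt_sqrt, dot_self_nonneg. Qed.

Lemma lagrange_identity (a b : pt) :
  cross a b * cross a b + dot a b * dot a b = dot a a * dot b b.
Proof. destruct a, b. unfold cross, dot; simpl. ring. Qed.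

Lemma dot_in_frame (a b q : pt) :
  dot b b * dot a q = dot a b * dot q b + cross b a * cross b q.
Proof. destruct a, b, q. unfold cross, dot; simpl. ring. Qed.

Lemma cross_in_frame (a b q : pt) :
  dot b b * cross a q = dot a b * cross b q - dot q b * cross b a.
Proof. destruct a, b, q. unfold cross, dot; simpl. ring. Qed.

Lemma rot_of_dot_cross (a q : pt) (t : R) : 0 < dot a a ->
  dot a q = dot a a * cos t -> cross a q = dot a a * sin t -> q = rot t a.
Proof.
  intros Ha Hdot Hcross. destruct a as [a1 a2], q as [q1 q2].
  unfold dot, cross, rot in *; simpl in *.
  f_equal; apply Rmult_eq_reg_l with (a1 * a1 + a2 * a2); try lra.
  - transitivity (a1 * (a1 * q1 + a2 * q2) - a2 * (a1 * q2 - a2 * q1)); [ring|].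
    rewrite Hdot, Hcross. ring.
  - transitivity (a2 * (a1 * q1 + a2 * q2) + a1 * (a1 * q2 - a2 * q1)); [ring|].
    rewrite Hdot, Hcross. ring.
Qed.

Lemma angle_dot (u v : pt) : 0 < norm u -> 0 < norm v ->
  dot u v = norm u * norm v * cos (angle u v).
Proof.
  intros Hu Hv. unfold angle.
  assert (Hp : 0 < norm u * norm v) by (apply Rmult_lt_0_compat; assumption).
  assert (Hcs : dot u v * dot u v <= (norm u * norm v) * (norm u * norm v)).
  { replace (norm u * norm v * (norm u * norm v)) with (norm u * norm u * (norm v * norm v))
      by ring.
    rewrite !norm_sq, <- lagrange_identity. pose proof (Rle_0_sqr (cross u v)).
    unfold Rsqr in *. lra. }
  rewrite cos_acos; [field; lra|].
  split; apply Rmult_le_reg_r with (norm u * norm v); try exact Hp;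
    unfold Rdiv; rewrite Rmult_assoc, Rinv_l, Rmult_1_r by lra; nra.
Qed.

Lemma cross_anticomm (a b : pt) : cross b a = - cross a b.
Proof. unfold cross. ring. Qed.

Lemma half_angle_double (al y : R) : 0 < al < PI -> 0 < y ->
  kite_sq al y * cos (2 * half_angle al y) = (1 - y * cos al) ^ 2 - (y * sin al) ^ 2 /\
  kite_sq al y * sin (2 * half_angle al y) = 2 * (y * sin al) * (1 - y * cos al).
Proof.
  intros Hal Hy. destruct (half_angle_cos_sin al y Hal Hy) as [Hch Hsh].
  pose proof (sqrt_lt_R0 _ (kite_sq_pos al y Hal)).
  pose proof (sqrt_kite_sq_sq al y Hal) as HV2.
  rewrite cos_2a, sin_2a, Hch, Hsh.
  set (V := sqrt (kite_sq al y)) in *. rewrite <- HV2.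
  split; field; lra.
Qed.

Lemma half_angle_range (al y : R) : 0 < al < PI -> 0 < y -> y * cos al <= 1 ->
  0 < 2 * half_angle al y <= PI.
Proof.
  intros Hal Hy Hyc. destruct (half_angle_cos_sin al y Hal Hy) as [Hch Hsh].
  pose proof (sqrt_lt_R0 _ (kite_sq_pos al y Hal)).
  pose proof (sin_gt_0 al ltac:(lra) ltac:(lra)).
  pose proof (acos_bound ((1 - y * cos al) / sqrt (kite_sq al y))) as Hb.
  fold (half_angle al y) in Hb.
  assert (Hsin : 0 < sin (half_angle al y))
    by (rewrite Hsh; apply Rdiv_lt_0_compat; [apply Rmult_lt_0_compat|]; lra).
  assert (Hcos : 0 <= cos (half_angle al y))
    by (rewrite Hch; apply Rmult_le_pos; [lra | left; apply Rinv_0_lt_compat; lra]).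
  split.
  - destruct (Req_dec (half_angle al y) 0) as [E|]; [rewrite E, sin_0 in Hsin|]; lra.
  - destruct (Rle_lt_dec (half_angle al y) (PI / 2)) as [|Hgt]; [lra|].
    pose proof (cos_lt_0 _ Hgt ltac:(lra)). lra.
Qed.

Lemma kite_corner_cross_eq (s : R) (a b q : pt) : sign s ->
  dot a a = dot q q -> dot a b = dot q b ->
  0 < s * (cross a b + cross b q) -> cross a b = cross b q.
Proof.
  intros Hs Haq Hab Harea.
  assert (Hsq : (cross a b - cross b q) * (cross a b + cross b q) = 0).
  { pose proof (lagrange_identity a b) as La. pose proof (lagrange_identity q b) as Lq.
    rewrite (cross_anticomm q b). rewrite Haq, Hab in La. nra. }
  destruct (Rmult_integral _ _ Hsq) as [E|E]; [lra|].
  rewrite E, Rmult_0_r in Harea. lra.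
Qed.

(* A corner of a kite, translated so that the centre of the circle of radius
   [r] sits at the origin: [a] and [q] are the two intersection points and [b]
   is the other centre, whose radius is [y * r]. *)
Section KiteCorner.
Variables (al r y s : R) (a b q : pt).
Hypotheses (Hal : 0 < al < PI) (Hr : 0 < r) (Hy : 0 < y) (Hs : sign s).
Hypotheses (Ha : dot a a = r * r) (Hq : dot q q = r * r)
  (Hab : dot a b = r * r * (1 - y * cos al)) (Hqb : dot q b = r * r * (1 - y * cos al))
  (Hb : dot b b = r * r * kite_sq al y) (Harea : 0 < s * (cross a b + cross b q)).

Lemma kite_corner_cross : cross b q = cross a b /\ s * cross a b = r * r * (y * sin al).
Proof.
  assert (Hbq : cross a b = cross b q)
    by (apply (kite_corner_cross_eq s); [exact Hs | congruence | congruence | exact Harea]).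
  split; [symmetry; exact Hbq|].
  pose proof (sin_gt_0 al ltac:(lra) ltac:(lra)). pose proof (sin_cos_sq al).
  assert (Hx2 : cross a b * cross a b = (r * r * (y * sin al)) * (r * r * (y * sin al))).
  { pose proof (lagrange_identity a b) as HL.
    rewrite Ha, Hab, Hb in HL. unfold kite_sq in *. nra. }
  apply Rsqr_inj; [rewrite <- Hbq in Harea; nra | apply Rmult_le_pos; nra |].
  unfold Rsqr. transitivity (s * s * (cross a b * cross a b)); [ring|].
  rewrite (sign_sq s Hs), Hx2. ring.
Qed.

Lemma kite_corner_cross_aq :
  dot b b * cross a q = 2 * (r * r * (1 - y * cos al)) * cross a b.
Proof.
  rewrite cross_in_frame, (cross_anticomm a b), Hab, Hqb, (proj1 kite_corner_cross). ring.
Qed.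

Lemma kite_corner_rot : q = rot (s * (2 * half_angle al y)) a.
Proof.
  destruct kite_corner_cross as [Hbq Hsx].
  destruct (half_angle_double al y Hal Hy) as [Hcos2 Hsin2].
  assert (Hx : cross a b = s * (r * r * (y * sin al)))
    by (rewrite <- Hsx, <- Rmult_assoc, (sign_sq s Hs); ring).
  assert (HrQ : 0 < r * r * kite_sq al y)
    by (apply Rmult_lt_0_compat; [nra | apply kite_sq_pos, Hal]).
  apply rot_of_dot_cross; rewrite Ha; [nra | |].
  - rewrite cos_sign by exact Hs.
    apply Rmult_eq_reg_l with (r * r * kite_sq al y); [|lra].
    transitivity (dot b b * dot a q); [rewrite Hb; ring|].
    rewrite dot_in_frame, (cross_anticomm a b), Hab, Hqb, Hbq, Hx.
    transitivity (r * r * (r * r) * (kite_sq al y * cos (2 * half_angle al y))); [|ring].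
    rewrite Hcos2.
    transitivity (r * r * (r * r) * ((1 - y * cos al) ^ 2 - s * s * (y * sin al) ^ 2)); [ring|].
    rewrite (sign_sq s Hs). ring.
  - rewrite sin_sign by exact Hs.
    apply Rmult_eq_reg_l with (r * r * kite_sq al y); [|lra].
    transitivity (dot b b * cross a q); [rewrite Hb; ring|].
    rewrite kite_corner_cross_aq, Hx.
    transitivity (r * r * (r * r) * s * (kite_sq al y * sin (2 * half_angle al y))); [|ring].
    rewrite Hsin2. ring.
Qed.

(* Convexity at the corner bounds the corner angle by [PI]; convexity at the
   opposite corner forces [cos al <= y]. *)
Lemma kite_corner_convex :
  0 <= s * cross a q -> 0 <= s * cross (vsub b a) (vsub q b) ->
  y * cos al <= 1 /\ cos al <= y.
Proof.
  intros Hconv1 Hconv2.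
  destruct kite_corner_cross as [Hbq Hsx].
  pose proof (sin_gt_0 al ltac:(lra) ltac:(lra)).
  pose proof (kite_sq_pos al y Hal).
  assert (HP : 0 < 2 * (r * r * (r * r * (y * sin al)))) by (repeat apply Rmult_lt_0_compat; lra).
  assert (Hbb : 0 < dot b b) by (rewrite Hb; apply Rmult_lt_0_compat; [nra | assumption]).
  split.
  - assert (E : dot b b * (s * cross a q)
                = 2 * (r * r * (r * r * (y * sin al))) * (1 - y * cos al)).
    { transitivity (s * (dot b b * cross a q)); [ring|].
      rewrite kite_corner_cross_aq.
      transitivity (2 * (r * r) * (1 - y * cos al) * (s * cross a b)); [ring|].
      rewrite Hsx. ring. }
    assert (0 <= dot b b * (s * cross a q)) by (apply Rmult_le_pos; lra).
    set (P := 2 * (r * r * (r * r * (y * sin al)))) in *. nra.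
  - assert (E : dot b b * (s * cross (vsub b a) (vsub q b))
                = 2 * (r * r * (r * r * (y * sin al))) * y * (y - cos al)).
    { replace (cross (vsub b a) (vsub q b)) with (cross a b + cross b q - cross a q)
        by (unfold cross, vsub; simpl; ring).
      rewrite Hbq.
      transitivity (2 * (s * cross a b) * dot b b - s * (dot b b * cross a q)); [ring|].
      rewrite kite_corner_cross_aq.
      transitivity (2 * (s * cross a b) * (dot b b - r * r * (1 - y * cos al))); [ring|].
      rewrite Hsx, Hb. unfold kite_sq. ring. }
    assert (0 <= dot b b * (s * cross (vsub b a) (vsub q b))) by (apply Rmult_le_pos; lra).
    assert (HPy : 0 < 2 * (r * r * (r * r * (y * sin al))) * y) by (apply Rmult_lt_0_compat; lra).
    set (P := 2 * (r * r * (r * r * (y * sin al))) * y) in *. nra.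
Qed.

Lemma kite_corner :
  0 <= s * cross a q -> 0 <= s * cross (vsub b a) (vsub q b) ->
  q = rot (s * (2 * half_angle al y)) a /\ cos al <= y /\
  0 < 2 * half_angle al y <= PI /\ 0 < s * cross a b /\ 0 < s * cross b q.
Proof.
  intros Hconv1 Hconv2.
  destruct kite_corner_cross as [Hbq Hsx].
  destruct (kite_corner_convex Hconv1 Hconv2) as [Hyc Hcy].
  pose proof (sin_gt_0 al ltac:(lra) ltac:(lra)).
  assert (HK : 0 < r * r * (y * sin al)) by (apply Rmult_lt_0_compat; nra).
  repeat split.
  - exact kite_corner_rot.
  - exact Hcy.
  - apply half_angle_range; assumption.
  - apply half_angle_range; assumption.
  - rewrite Hsx. exact HK.
  - rewrite Hbq, Hsx. exact HK.
Qed.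

End KiteCorner.

Lemma dist_comm (P Q : pt) : dist P Q = dist Q P.
Proof. unfold dist, norm, vsub, dot; simpl. f_equal. ring. Qed.

Lemma angle_comm (u v : pt) : angle u v = angle v u.
Proof. unfold angle, dot. rewrite (Rmult_comm (norm u)). f_equal. f_equal. ring. Qed.

Lemma corner_triangle (al r r' : R) (c P C : pt) : 0 < r -> 0 < r' ->
  dist P c = r -> dist P C = r' -> angle (vsub c P) (vsub C P) = al ->
  dot (vsub P c) (vsub P c) = r * r /\
  dot (vsub P c) (vsub C c) = r * r * (1 - r' / r * cos al) /\
  dot (vsub C c) (vsub C c) = r * r * kite_sq al (r' / r).
Proof.
  intros Hr Hr' HPc HPC Hang.
  assert (Nc : norm (vsub c P) = r) by (rewrite <- HPc, dist_comm; reflexivity).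
  assert (NC : norm (vsub C P) = r') by (rewrite <- HPC, dist_comm; reflexivity).
  pose proof (angle_dot (vsub c P) (vsub C P) ltac:(lra) ltac:(lra)) as Hdot.
  rewrite Nc, NC, Hang in Hdot.
  pose proof (norm_sq (vsub c P)) as Hc2. pose proof (norm_sq (vsub C P)) as HC2.
  rewrite Nc in Hc2. rewrite NC in HC2. symmetry in Hc2, HC2.
  destruct c as [c1 c2], P as [P1 P2], C as [C1 C2].
  unfold dot, vsub, kite_sq in *; simpl in *.
  repeat split.
  - rewrite <- Hc2. ring.
  - transitivity ((c1 - P1) * (c1 - P1) + (c2 - P2) * (c2 - P2)
                  - ((c1 - P1) * (C1 - P1) + (c2 - P2) * (C2 - P2))); [ring|].
    rewrite Hc2, Hdot. field. lra.
  - transitivity ((C1 - P1) * (C1 - P1) + (C2 - P2) * (C2 - P2)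
                  - 2 * ((c1 - P1) * (C1 - P1) + (c2 - P2) * (C2 - P2))
                  + ((c1 - P1) * (c1 - P1) + (c2 - P2) * (c2 - P2))); [ring|].
    rewrite Hc2, HC2, Hdot. field. lra.
Qed.

Lemma shoelace_shift (o P C Q : pt) :
  cross o P + cross P C + cross C Q + cross Q o
  = cross (vsub P o) (vsub C o) + cross (vsub C o) (vsub Q o).
Proof. destruct o, P, C, Q. unfold cross, vsub; simpl. ring. Qed.

Lemma vsub_shift (o X Y : pt) : vsub (vsub X o) (vsub Y o) = vsub X Y.
Proof. destruct o, X, Y. unfold vsub; simpl. f_equal; ring. Qed.

Lemma cross_vsub_swap (o P Q : pt) :
  cross (vsub o Q) (vsub P o) = cross (vsub P o) (vsub Q o).
Proof. destruct o, P, Q. unfold cross, vsub; simpl. ring. Qed.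

Definition padd (u : pt) (e : R) (w : pt) : pt := (fst u + e * fst w, snd u + e * snd w).

Lemma small_affine_pos (b B : R) :
  0 < b -> exists e0, 0 < e0 /\ forall e, 0 < e <= e0 -> 0 < b + e * B.
Proof.
  intros Hb. pose proof (Rabs_pos B). exists (b / (Rabs B + 1)). split.
  - apply Rdiv_lt_0_compat; lra.
  - intros e [He1 He2].
    assert (e * (Rabs B + 1) <= b).
    { apply (Rmult_le_compat_r (Rabs B + 1)) in He2; [|lra].
      unfold Rdiv in He2. rewrite Rmult_assoc, Rinv_l, Rmult_1_r in He2 by lra. exact He2. }
    assert (- (e * Rabs B) <= e * B).
    { destruct (Rcase_abs B); [rewrite Rabs_left by assumption | rewrite Rabs_right by assumption];
        nra. }
    nra.
Qed.

(* The diagonal [o C] cuts the quadrilateral [o P C Q] into two triangles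
   oriented by [s]; points near [o] in a direction [w] strictly inside the angle
   [P o Q] lie in its interior. *)
Lemma sector_into_quad (s : R) (o P C Q w : pt) :
  0 < s * cross (vsub P o) w -> 0 < s * cross w (vsub Q o) ->
  0 < s * cross (vsub P o) (vsub C o) -> 0 < s * cross (vsub C o) (vsub Q o) ->
  exists e0, 0 < e0 /\ forall e, 0 < e <= e0 ->
    0 < s * cross (vsub P o) (vsub (padd o e w) o) /\
    0 < s * cross (vsub C P) (vsub (padd o e w) P) /\
    0 < s * cross (vsub Q C) (vsub (padd o e w) C) /\
    0 < s * cross (vsub o Q) (vsub (padd o e w) Q).
Proof.
  intros HPw HwQ HPC HCQ.
  destruct o as [o1 o2], P as [P1 P2], C as [C1 C2], Q as [Q1 Q2], w as [w1 w2].
  unfold cross, vsub, padd in *; simpl in *.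
  destruct (small_affine_pos _ (s * ((C1 - P1) * w2 - (C2 - P2) * w1)) HPC) as [e1 [He1 F1]].
  destruct (small_affine_pos _ (s * ((Q1 - C1) * w2 - (Q2 - C2) * w1)) HCQ) as [e2 [He2 F2]].
  exists (Rmin e1 e2). split; [apply Rmin_glb_lt; assumption|].
  intros e [He He']. pose proof (Rmin_l e1 e2). pose proof (Rmin_r e1 e2).
  specialize (F1 e ltac:(lra)). specialize (F2 e ltac:(lra)).
  repeat split.
  - match goal with |- 0 < ?g => replace g with
      (e * (s * ((P1 - o1) * w2 - (P2 - o2) * w1))) by ring end.
    apply Rmult_lt_0_compat; lra.
  - match goal with |- 0 < ?g => replace g with
      (s * ((P1 - o1) * (C2 - o2) - (P2 - o2) * (C1 - o1))
       + e * (s * ((C1 - P1) * w2 - (C2 - P2) * w1))) by ring end.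
    exact F1.
  - match goal with |- 0 < ?g => replace g with
      (s * ((C1 - o1) * (Q2 - o2) - (C2 - o2) * (Q1 - o1))
       + e * (s * ((Q1 - C1) * w2 - (Q2 - C2) * w1))) by ring end.
    exact F2.
  - match goal with |- 0 < ?g => replace g with
      (e * (s * (w1 * (Q2 - o2) - w2 * (Q1 - o1)))) by ring end.
    apply Rmult_lt_0_compat; lra.
Qed.

Lemma sign_cross_rot (s t1 t2 : R) (a : pt) : sign s ->
  s * cross (rot (s * t1) a) (rot (s * t2) a) = dot a a * sin (t2 - t1).
Proof.
  intros Hs. rewrite cross_rot_rot.
  replace (s * t2 - s * t1) with (s * (t2 - t1)) by ring.
  rewrite sin_sign by exact Hs.
  transitivity (s * s * (dot a a * sin (t2 - t1))); [ring|]. rewrite (sign_sq s Hs). ring.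
Qed.

Section PatternCorner.
Variables (D : bquad) (alpha : F D -> R) (c : W D -> pt) (r : W D -> R) (p : B D -> pt)
  (s : R).
Hypotheses (Had : admissible D alpha) (Hcp : circle_pattern D alpha c r p s)
  (Hcv : convex_kites D c p s).

Definition corner_angle (f : F D) (i : bool) : R :=
  2 * half_angle (alpha f) (r (fw f (negb i)) / r (fw f i)).

(* The corner of the kite of [f] at the centre [c (fw f i)] sees the other
   vertices of the kite in the order p (fb f i), c (fw f (negb i)),
   p (fb f (negb i)), whichever [i] is. *)
Lemma pattern_corner (f : F D) (i : bool) :
  let o := c (fw f i) in
  vsub (p (fb f (negb i))) o = rot (s * corner_angle f i) (vsub (p (fb f i)) o) /\
  cos (alpha f) <= r (fw f (negb i)) / r (fw f i) /\
  0 < corner_angle f i <= PI /\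
  0 < s * cross (vsub (p (fb f i)) o) (vsub (c (fw f (negb i))) o) /\
  0 < s * cross (vsub (c (fw f (negb i))) o) (vsub (p (fb f (negb i))) o).
Proof.
  intros o.
  destruct Had as [Hal _]. destruct Hcp as [Hs [Hr Hf]].
  destruct (Hf f) as [Hd [Hang Harea]].
  pose proof (Hr (fw f i)) as Hri. pose proof (Hr (fw f (negb i))) as Hrn.
  assert (Hang' : forall j, angle (vsub o (p (fb f j))) (vsub (c (fw f (negb i))) (p (fb f j)))
                            = alpha f).
  { intros j. unfold o. destruct i; simpl; [rewrite angle_comm|]; apply Hang. }
  destruct (corner_triangle (alpha f) _ _ o (p (fb f i)) (c (fw f (negb i))) Hri Hrn
              (Hd i i) (Hd (negb i) i) (Hang' i)) as [Ha [Hab Hb]].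
  destruct (corner_triangle (alpha f) _ _ o (p (fb f (negb i))) (c (fw f (negb i))) Hri Hrn
              (Hd i (negb i)) (Hd (negb i) (negb i)) (Hang' (negb i))) as [Hq [Hqb _]].
  pose proof (Hcv f 1%nat ltac:(lia)) as K1. pose proof (Hcv f 3%nat ltac:(lia)) as K3.
  unfold kite_area2, kv, kite in Harea, K1, K3. simpl in Harea, K1, K3.
  assert (Harea' : 0 < s * (cross (vsub (p (fb f i)) o) (vsub (c (fw f (negb i))) o)
                           + cross (vsub (c (fw f (negb i))) o) (vsub (p (fb f (negb i))) o))).
  { rewrite <- shoelace_shift. unfold o. destruct i; simpl; lra. }
  assert (Hconv1 : 0 <= s * cross (vsub (p (fb f i)) o) (vsub (p (fb f (negb i))) o)).
  { rewrite <- cross_vsub_swap. unfold o. destruct i; simpl; assumption. }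
  assert (Hconv2 : 0 <= s * cross (vsub (vsub (c (fw f (negb i))) o) (vsub (p (fb f i)) o))
                                  (vsub (vsub (p (fb f (negb i))) o) (vsub (c (fw f (negb i))) o))).
  { rewrite !vsub_shift. unfold o. destruct i; simpl; assumption. }
  apply (kite_corner (alpha f) (r (fw f i))); try assumption;
    [apply Hal | apply Rdiv_lt_0_compat; assumption].
Qed.

Lemma corner_sector_interior (f : F D) (i : bool) (a : pt) (sg psi : R) :
  vsub (p (fb f i)) (c (fw f i)) = rot (s * sg) a -> 0 < dot a a ->
  sg < psi < sg + corner_angle f i ->
  exists e0, 0 < e0 /\ forall e, 0 < e <= e0 ->
    in_kite_int D c p s f (padd (c (fw f i)) e (rot (s * psi) a)).
Proof.
  intros Hstart Ha Hpsi.
  pose proof Hcp as [Hs _].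
  destruct (pattern_corner f i) as [Hend [_ [Hth [HPC HCQ]]]].
  destruct (sector_into_quad s (c (fw f i)) (p (fb f i)) (c (fw f (negb i)))
              (p (fb f (negb i))) (rot (s * psi) a)) as [e0 [He0 Hint]]; try assumption.
  - rewrite Hstart, sign_cross_rot by exact Hs.
    apply Rmult_lt_0_compat; [exact Ha|]. apply sin_gt_0; lra.
  - rewrite Hend, Hstart, rot_add.
    replace (s * corner_angle f i + s * sg)
      with (s * (sg + corner_angle f i)) by ring.
    rewrite sign_cross_rot by exact Hs.
    apply Rmult_lt_0_compat; [exact Ha|]. apply sin_gt_0; lra.
  - exists e0. split; [exact He0|]. intros e He.
    destruct (Hint e He) as [I1 [I2 [I3 I4]]].
    intros k Hk. destruct k as [|[|[|[|k]]]]; [| | | | lia];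
      destruct i; unfold kv, kite; simpl in *; assumption.
Qed.

End PatternCorner.

Definition sumL {X : Type} (g : X -> R) (L : list X) : R :=
  fold_right (fun x acc => g x + acc) 0 L.

Lemma sumL_pos {X : Type} (g : X -> R) (L : list X) :
  (forall x, In x L -> 0 < g x) -> L <> nil -> 0 < sumL g L.
Proof.
  induction L as [|x L IH]; intros Hg Hne; [congruence|]. simpl.
  pose proof (Hg x (or_introl eq_refl)).
  destruct L as [|y L]; simpl; [lra|].
  assert (0 < sumL g (y :: L)) by (apply IH; [intros; apply Hg; right | congruence]; assumption).
  simpl in *. lra.
Qed.

Lemma chain_app_l {X : Type} (Rl : X -> X -> Prop) (L M : list X) :
  chain Rl (L ++ M) -> chain Rl L.
Proof.
  induction L as [|x [|y L] IH]; simpl; tauto.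
Qed.

Lemma interval_pick (sg t lo hi : R) : sg <= lo < hi -> lo < sg + t ->
  exists psi, lo < psi < hi /\ sg < psi < sg + t.
Proof.
  intros Hlo Ht. exists ((lo + Rmin hi (sg + t)) / 2).
  pose proof (Rmin_l hi (sg + t)). pose proof (Rmin_r hi (sg + t)).
  assert (lo < Rmin hi (sg + t)) by (apply Rmin_glb_lt; lra). lra.
Qed.

Section Sectors.
Variables (X : Type) (Rl : X -> X -> Prop) (dir_in dir_out : X -> pt) (turn : X -> R) (s : R).
Hypothesis Hlink : forall x y, Rl x y -> dir_out x = dir_in y.

Lemma sectors_rot (L : list X) (x z : X) :
  (forall w, In w (x :: L) -> dir_out w = rot (s * turn w) (dir_in w)) ->
  chain Rl (x :: L ++ z :: nil) -> dir_in z = rot (s * sumL turn (x :: L)) (dir_in x).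
Proof.
  induction L as [|y L IH] in x |- *; intros Hrot [Hxy Hc].
  - rewrite <- (Hlink _ _ Hxy), Hrot by (left; reflexivity). simpl. f_equal. ring.
  - rewrite (IH y), <- (Hlink _ _ Hxy), Hrot, rot_add; try (simpl; tauto).
    + f_equal. simpl. ring.
    + intros w Hw. apply Hrot. right. exact Hw.
Qed.

Lemma sectors_cover (L : list X) (x : X) (a : pt) (sg lo hi : R) :
  (forall w, In w (x :: L) -> dir_out w = rot (s * turn w) (dir_in w)) ->
  chain Rl (x :: L) -> dir_in x = rot (s * sg) a ->
  sg <= lo < hi -> lo < sg + sumL turn (x :: L) ->
  exists w sw psi, In w (x :: L) /\ dir_in w = rot (s * sw) a /\
    lo < psi < hi /\ sw < psi < sw + turn w.
Proof.
  induction L as [|y L IH] in x, sg |- *; intros Hrot Hc Hx Hlo Hsum;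
    (destruct (Rlt_le_dec lo (sg + turn x)) as [Hin | Hpast];
     [destruct (interval_pick sg (turn x) lo hi Hlo Hin) as [psi Hpsi];
      exists x, sg, psi; simpl; tauto |]).
  - simpl in Hsum. lra.
  - destruct Hc as [Hxy Hc].
    destruct (IH y (sg + turn x)) as [w [sw [psi [Hw Hrest]]]];
      [intros w Hw; apply Hrot; right; exact Hw | exact Hc | | lra | simpl in *; lra |].
    + rewrite <- (Hlink _ _ Hxy), Hrot, Hx, rot_add by (left; reflexivity). f_equal. ring.
    + exists w, sw, psi. split; [right; exact Hw | exact Hrest].
Qed.

End Sectors.

Lemma cos_eq_1_2PI (t : R) : 0 < t <= 2 * PI -> cos t = 1 -> t = 2 * PI.
Proof.
  intros Ht Hcos. destruct (Rle_lt_dec (2 * PI) t) as [|Hlt]; [lra|].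
  pose proof (cos_2a_sin (t / 2)) as Hc2. replace (2 * (t / 2)) with t in Hc2 by field.
  assert (0 < sin (t / 2)) by (apply sin_gt_0; lra). nra.
Qed.

Lemma corners_distinct_faces (D : bquad) (v : W D) (f g : F D) (i j : bool) :
  is_bquad D -> fw f i = v -> fw g j = v -> (f, i) <> (g, j) -> f <> g.
Proof.
  intros [_ [_ [_ [Hdist _]]]] Hf Hg Hne <-.
  destruct (Hdist f) as [Hw _]. apply Hne.
  destruct i, j; try reflexivity; exfalso; apply Hw; congruence.
Qed.

Section AngleSum.
Variables (D : bquad) (alpha : F D -> R) (c : W D -> pt) (r : W D -> R) (p : B D -> pt)
  (s : R) (v : W D) (l : list (F D * bool)).
Hypotheses (Hbq : is_bquad D) (Had : admissible D alpha)
  (Hcp : circle_pattern D alpha c r p s) (Hcv : convex_kites D c p s)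
  (Hemb : embedded D c p s).
Hypotheses (Hnil : l <> nil) (Hnd : NoDup l) (Hmem : forall f i, fw f i = v <-> In (f, i) l)
  (Hcyc : cyc_chain (fun x y => fb (fst x) (negb (snd x)) = fb (fst y) (snd y)) l).

Let turn (x : F D * bool) : R := corner_angle D alpha r (fst x) (snd x).
Let dir_in (x : F D * bool) : pt := vsub (p (fb (fst x) (snd x))) (c v).
Let dir_out (x : F D * bool) : pt := vsub (p (fb (fst x) (negb (snd x)))) (c v).

Lemma corners_at_v_cons : exists x t, l = x :: t.
Proof. destruct l as [|x t]; [congruence | exists x, t; reflexivity]. Qed.

Lemma corner_at_v (x : F D * bool) : In x l -> fw (fst x) (snd x) = v.
Proof. destruct x as [f i]. apply Hmem. Qed.

Lemma corner_rot_at_v (x : F D * bool) : In x l -> dir_out x = rot (s * turn x) (dir_in x).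
Proof.
  intros Hx. unfold dir_in, dir_out, turn. rewrite <- (corner_at_v x Hx).
  apply (pattern_corner D alpha c r p s Had Hcp Hcv).
Qed.

Lemma corner_angle_at_v (x : F D * bool) : In x l -> 0 < turn x <= PI.
Proof. intros _. apply (pattern_corner D alpha c r p s Had Hcp Hcv). Qed.

Lemma corner_start_nonzero (x : F D * bool) : In x l -> 0 < dot (dir_in x) (dir_in x).
Proof.
  intros Hx. destruct Hcp as [_ [Hr Hf]]. destruct (Hf (fst x)) as [Hd _].
  unfold dir_in. rewrite <- (corner_at_v x Hx), <- norm_sq.
  change (norm (vsub (p (fb (fst x) (snd x))) (c (fw (fst x) (snd x)))))
    with (dist (p (fb (fst x) (snd x))) (c (fw (fst x) (snd x)))).
  rewrite Hd. pose proof (Hr (fw (fst x) (snd x))). nra.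
Qed.

Lemma corner_link (x y : F D * bool) :
  fb (fst x) (negb (snd x)) = fb (fst y) (snd y) -> dir_out x = dir_in y.
Proof. unfold dir_out, dir_in. intros ->. reflexivity. Qed.

Lemma corner_angles_close : cos (sumL turn l) = 1.
Proof.
  pose proof Hcp as [Hs _].
  destruct (corners_at_v_cons) as [x1 [t El]].
  pose proof Hcyc as Hc. rewrite El in Hc. rewrite El.
  assert (Hclose : dir_in x1 = rot (s * sumL turn (x1 :: t)) (dir_in x1)).
  { apply (sectors_rot _ _ dir_in dir_out turn s corner_link t x1 x1); [|exact Hc].
    intros w Hw. apply corner_rot_at_v. rewrite El. exact Hw. }
  pose proof (dot_rot (s * sumL turn (x1 :: t)) (dir_in x1)) as Hd.
  rewrite <- Hclose, cos_sign in Hd by exact Hs.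
  pose proof (corner_start_nonzero x1 ltac:(rewrite El; left; reflexivity)).
  apply Rmult_eq_reg_l with (dot (dir_in x1) (dir_in x1)); lra.
Qed.

Lemma corner_sectors_disjoint (x y : F D * bool) (a : pt) (sx sy psi : R) :
  In x l -> In y l -> fst x <> fst y -> 0 < dot a a ->
  dir_in x = rot (s * sx) a -> dir_in y = rot (s * sy) a ->
  sx < psi < sx + turn x -> sy < psi < sy + turn y -> False.
Proof.
  intros Hx Hy Hneq Ha Hdx Hdy Hpx Hpy.
  pose proof (corner_at_v _ Hx) as Hvx. pose proof (corner_at_v _ Hy) as Hvy.
  destruct x as [f i], y as [g j]. unfold dir_in, turn in *. simpl in *.
  rewrite <- Hvx in Hdx. rewrite <- Hvy in Hdy.
  destruct (corner_sector_interior D alpha c r p s Had Hcp Hcv f i a sx psi Hdx Ha Hpx)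
    as [e0 [He0 I0]].
  destruct (corner_sector_interior D alpha c r p s Had Hcp Hcv g j a sy psi Hdy Ha Hpy)
    as [e1 [He1 I1]].
  pose proof (Rmin_l e0 e1). pose proof (Rmin_r e0 e1).
  assert (He : 0 < Rmin e0 e1) by (apply Rmin_glb_lt; assumption).
  specialize (I0 (Rmin e0 e1) ltac:(lra)). specialize (I1 (Rmin e0 e1) ltac:(lra)).
  rewrite Hvx in I0. rewrite Hvy in I1.
  apply (proj1 (Hemb f g Hneq) (padd (c v) (Rmin e0 e1) (rot (s * psi) a))).
  split; assumption.
Qed.

(* If the corner angles at [v] added up to more than [2 PI], the sectors
   would wind past the first one and two kites would overlap near [c v]. *)
Lemma corner_angles_le_2PI : sumL turn l <= 2 * PI.
Proof.
  pose proof Hcp as [Hs _]. pose proof PI_RGT_0.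
  destruct (Rle_lt_dec (sumL turn l) (2 * PI)) as [|Hgt]; [assumption|exfalso].
  destruct corners_at_v_cons as [x1 [t0 El]].
  pose proof Hcyc as Hc. rewrite El in Hc, Hgt.
  assert (Hin1 : In x1 l) by (rewrite El; left; reflexivity).
  pose proof (corner_angle_at_v x1 Hin1).
  destruct t0 as [|x2 t]; [simpl in Hgt; lra|].
  assert (Hin : forall w, In w (x2 :: t) -> In w l) by (intros; rewrite El; right; assumption).
  destruct Hc as [H12 Hcyc'].
  destruct (sectors_cover _ _ dir_in dir_out turn s corner_link t x2 (dir_in x1) (turn x1)
              (2 * PI) (2 * PI + turn x1)) as [w [sw [psi [Hw [Hdw [Hpsi1 Hpsi2]]]]]];
    [intros w Hw; apply corner_rot_at_v, Hin, Hw
    | apply (chain_app_l _ _ (x1 :: nil)), Hcyc'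
    | rewrite <- (corner_link _ _ H12); apply corner_rot_at_v, Hin1
    | lra | simpl in *; lra |].
  apply (corner_sectors_disjoint w x1 (dir_in x1) sw (2 * PI) psi (Hin _ Hw) Hin1);
    [| apply corner_start_nonzero, Hin1 | exact Hdw | symmetry; apply rot_sign_2PI, Hs
     | exact Hpsi2 | lra].
  destruct w as [f iw], x1 as [f1 i1]. simpl.
  apply (corners_distinct_faces D v f f1 iw i1 Hbq (corner_at_v _ (Hin _ Hw))
           (corner_at_v _ Hin1)).
  intros Heq. rewrite Heq in Hw.
  pose proof Hnd as Hnd'. rewrite El in Hnd'. inversion Hnd'. contradiction.
Qed.

Lemma corner_angle_sum : sumL turn l = 2 * PI.
Proof.
  apply cos_eq_1_2PI; [split|].
  - apply sumL_pos; [intros x Hx; apply corner_angle_at_v, Hx | exact Hnil].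
  - exact corner_angles_le_2PI.
  - exact corner_angles_close.
Qed.

End AngleSum.

Lemma sumL_perm {X : Type} (g : X -> R) (L M : list X) :
  Permutation L M -> sumL g L = sumL g M.
Proof. induction 1; simpl; lra. Qed.

Lemma sumL_le {X : Type} (g1 g2 : X -> R) (L : list X) :
  (forall x, In x L -> g1 x <= g2 x) -> sumL g1 L <= sumL g2 L.
Proof.
  induction L as [|x L IH]; simpl; intros H; [lra|].
  pose proof (H x (or_introl eq_refl)). assert (sumL g1 L <= sumL g2 L) by (apply IH; auto).
  lra.
Qed.

Lemma sumL_scal_sub {X : Type} (g1 g2 : X -> R) (u : R) (L : list X) :
  sumL (fun x => u * (g1 x - g2 x)) L = u * (sumL g1 L - sumL g2 L).
Proof. induction L as [|x L IH]; simpl; [|rewrite IH]; ring. Qed.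

Lemma sumL_filter {X : Type} (P : X -> bool) (g : X -> R) (L : list X) :
  sumL (fun x => if P x then g x else 0) L = sumL g (filter P L).
Proof. induction L as [|x L IH]; simpl; [|destruct (P x); simpl; rewrite IH]; ring. Qed.

Definition corners (D : bquad) : list (F D * bool) :=
  flat_map (fun f => (f, false) :: (f, true) :: nil) (enumF D).

Lemma corners_nodup (D : bquad) : NoDup (enumF D) -> NoDup (corners D).
Proof.
  unfold corners. induction (enumF D) as [|f L IH]; simpl; intros H; [constructor|].
  inversion H as [|? ? Hf HL]; subst.
  assert (Hn : forall b, ~ In (f, b) (flat_map (fun g => (g, false) :: (g, true) :: nil) L)).
  { intros b Hin. apply in_flat_map in Hin. destruct Hin as [g [Hg Hin]].
    simpl in Hin. destruct Hin as [E|[E|[]]]; inversion E; subst; contradiction. }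
  constructor.
  - intros [E|Hin]; [discriminate | exact (Hn false Hin)].
  - constructor; [apply Hn | apply IH, HL].
Qed.

Lemma in_corners (D : bquad) (x : F D * bool) : (forall f, In f (enumF D)) -> In x (corners D).
Proof.
  intros H. destruct x as [f b]. unfold corners. apply in_flat_map.
  exists f. split; [apply H | destruct b; simpl; auto].
Qed.

Lemma laplacian_corner_sum (D : bquad) (alpha : F D -> R) (r h : W D -> R) (v : W D)
    (l : list (F D * bool)) :
  is_bquad D -> NoDup l -> (forall f i, fw f i = v <-> In (f, i) l) ->
  laplacian D alpha r h v =
  sumL (fun x => mu D alpha r (fst x) v (fw (fst x) (negb (snd x))) *
                 (h (fw (fst x) (negb (snd x))) - h v)) l.
Proof.
  intros [_ [_ [[HndF HinF] _]]] Hnd Hmem.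
  set (T := fun x : F D * bool => mu D alpha r (fst x) v (fw (fst x) (negb (snd x))) *
                                  (h (fw (fst x) (negb (snd x))) - h v)).
  set (P := fun x : F D * bool => if eqW D (fw (fst x) (snd x)) v then true else false).
  assert (Hsplit : laplacian D alpha r h v = sumL (fun x => if P x then T x else 0) (corners D)).
  { clear HndF HinF. unfold laplacian, sumF, corners, sum_bool, P, T.
    induction (enumF D) as [|f L IH]; simpl; [reflexivity|]. simpl in IH. rewrite IH.
    destruct (eqW D (fw f false) v), (eqW D (fw f true) v); simpl; ring. }
  rewrite Hsplit, sumL_filter. apply sumL_perm, NoDup_Permutation;
    [apply NoDup_filter, corners_nodup, HndF | exact Hnd |].
  intros [f i]. rewrite filter_In. unfold P; simpl.
  destruct (eqW D (fw f i) v) as [E|N]; split.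
  - intros _. apply Hmem, E.
  - intros _. split; [apply in_corners, HinF | reflexivity].
  - intros [_ F]. discriminate.
  - intros Hin. exfalso. apply N, Hmem, Hin.
Qed.

Lemma laplacian_ext (D : bquad) (alpha : F D -> R) (r h1 h2 : W D -> R) (v : W D) :
  (forall w, h1 w = h2 w) -> laplacian D alpha r h1 v = laplacian D alpha r h2 v.
Proof.
  intros Hh. unfold laplacian, sumF, sum_bool.
  induction (enumF D) as [|f L IH]; simpl in *; [reflexivity|]. rewrite IH, !Hh. reflexivity.
Qed.

Lemma mu_ratio_term (al rv rw tv tw : R) :
  0 < al < PI -> 0 < rv -> 0 < rw -> 0 < tv -> 0 < tw ->
  2 * fprime al (ln (rw / rv)) * (tw / rw - tv / rv) =
  2 * (tv / rv) * (sin al * (tw / tv - rw / rv) / kite_sq al (rw / rv)).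
Proof.
  intros Hal Hrv Hrw Htv Htw.
  assert (Hy : 0 < rw / rv) by (apply Rdiv_lt_0_compat; assumption).
  pose proof (kite_sq_pos al (rw / rv) Hal).
  unfold fprime, cosh. rewrite exp_Ropp, exp_ln by exact Hy.
  replace ((rw / rv + / (rw / rv)) / 2 - cos al)
    with (kite_sq al (rw / rv) / (2 * (rw / rv))) by (unfold kite_sq; field; lra).
  field. repeat split; lra.
Qed.

Lemma laplacian_ratio_nonneg (D : bquad) (alpha : F D -> R)
  (c : W D -> pt) (r : W D -> R) (p : B D -> pt) (s : R)
  (ct : W D -> pt) (rt : W D -> R) (pt_ : B D -> pt) (st : R) (v : W D) :
  is_bquad D -> admissible D alpha ->
  circle_pattern D alpha c r p s -> convex_kites D c p s -> embedded D c p s ->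
  circle_pattern D alpha ct rt pt_ st -> convex_kites D ct pt_ st -> embedded D ct pt_ st ->
  interior_W D v -> 0 <= laplacian D alpha r (fun w => rt w / r w) v.
Proof.
  intros Hbq Had Hcp Hcv Hemb Hcpt Hcvt Hembt [l [Hne [Hnd [Hmem Hcyc]]]].
  rewrite (laplacian_corner_sum D alpha r _ v l Hbq Hnd Hmem).
  pose proof (corner_angle_sum D alpha c r p s v l Hbq Had Hcp Hcv Hemb Hne Hnd Hmem Hcyc)
    as Hsum.
  pose proof (corner_angle_sum D alpha ct rt pt_ st v l Hbq Had Hcpt Hcvt Hembt Hne Hnd Hmem
                Hcyc) as Hsumt.
  pose proof Hcp as [_ [Hr _]]. pose proof Hcpt as [_ [Hrt _]].
  set (u := rt v / r v).
  assert (Hu : 0 < u) by (apply Rdiv_lt_0_compat; auto).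
  apply Rle_trans with
    (sumL (fun x => u * (corner_angle D alpha rt (fst x) (snd x)
                         - corner_angle D alpha r (fst x) (snd x))) l).
  { rewrite sumL_scal_sub, Hsum, Hsumt. lra. }
  apply sumL_le. intros [f i] Hin. simpl.
  assert (Hv : fw f i = v) by (apply Hmem; exact Hin).
  destruct (pattern_corner D alpha c r p s Had Hcp Hcv f i) as [_ [Hy _]].
  destruct (pattern_corner D alpha ct rt pt_ st Had Hcpt Hcvt f i) as [_ [Hz _]].
  destruct Had as [Hal _].
  unfold corner_angle, mu, u. rewrite Hv in *.
  rewrite (mu_ratio_term (alpha f) (r v) (r (fw f (negb i))) (rt v) (rt (fw f (negb i))))
    by auto.
  fold u.
  pose proof (half_angle_sub_le (alpha f) (r (fw f (negb i)) / r v) (rt (fw f (negb i)) / rt v)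
    (Hal f) ltac:(apply Rdiv_lt_0_compat; auto) ltac:(apply Rdiv_lt_0_compat; auto) Hy Hz).
  nra.
Qed.

Theorem lemma6p4 (D : bquad) (alpha : F D -> R) (q : R)
  (c : W D -> pt) (r : W D -> R) (p : B D -> pt) (s : R)
  (ct : W D -> pt) (rt : W D -> R) (pt_ : B D -> pt) (st : R) :
  is_bquad D ->
  admissible D alpha ->
  1 < q ->
  ecq_pattern D alpha q c r p s ->
  ecq_pattern D alpha q ct rt pt_ st ->
  forall v : W D, interior_W D v ->
    0 <= laplacian D alpha r (fun w => rt w / r w) v /\
    0 <= laplacian D alpha rt (fun w => / (rt w / r w)) v.
Proof.
  intros Hbq Had _ [Hcp [Hcv [_ Hemb]]] [Hcpt [Hcvt [_ Hembt]]] v Hv. split.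
  - exact (laplacian_ratio_nonneg D alpha c r p s ct rt pt_ st v
             Hbq Had Hcp Hcv Hemb Hcpt Hcvt Hembt Hv).
  - rewrite (laplacian_ext D alpha rt _ (fun w => r w / rt w)).
    + exact (laplacian_ratio_nonneg D alpha ct rt pt_ st c r p s v
               Hbq Had Hcpt Hcvt Hembt Hcp Hcv Hemb Hv).
    + intros w. pose proof Hcp as [_ [Hr _]]. pose proof Hcpt as [_ [Hrt _]].
      pose proof (Hr w). pose proof (Hrt w). field. split; lra.
Qed.
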